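(* Let $\Gamma$ be an ordered abelian group and let $v:\mathcal{T}(\Gamma)\to\Gamma'\cup\{\infty\}$ be a valuation on the hyperfield $\mathcal{T}(\Gamma)$ with value group $\Gamma'$. Then there exists a convex subgroup $\Delta$ of $\Gamma$ such that $\Gamma/\Delta\simeq\Gamma'$ via an order-preserving group isomorphism.
   Context: A hyperfield is $(F,+,\cdot,0,1)$ with $+$ a multivalued operation making $(F,+,0)$ a canonical hypergroup (associative, commutative, unique inverses $-x$ with $0\in x+(-x)$, and $z\in x+y\Rightarrow y\in z+(-x)$), $(F,\cdot)$ commutative with $0$ absorbing, $x(y+z)=xy+xz$, and $F\setminus\{0\}$ an abelian group with neutral $1\neq0$. For an ordered abelian group $(\Gamma,+,<,0)$ and $\infty>\Gamma$ with $\gamma+\infty=\infty+\gamma=\infty$, $\mathcal{T}(\Gamma)$ is the hyperfield on $\Gamma\cup\{\infty\}$ with multiplication $+$, zero $\infty$, unit $0$, and hyperaddition $x\boxplus\infty=\infty\boxplus x=\{x\}$, $x\boxplus y=\{\min\{x,y\}\}$ for $x\neq y$, $x\boxplus x=\{z:x\le z\le\infty\}$. Valuation on a hyperfield $F$: a surjective map $v:F\to\Gamma'\cup\{\infty\}$ ($\Gamma'$ ordered abelian group) with $vx=\infty\iff x$ is the zero of $F$, $v(xy)=vx+vy$, $z\in x+y\Rightarrow vz\ge\min\{vx,vy\}$; its value group is the image of the non-zero elements. A subgroup $\Delta\le\Gamma$ is convex if $\delta_1<\gamma<\delta_2$ with $\delta_i\in\Delta$ implies $\gamma\in\Delta$;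 $\Gamma/\Delta$ is ordered by $x+\Delta\prec y+\Delta$ iff $x<y$ and $y-x\notin\Delta$. *)

From mathcomp Require Import all_boot all_order all_algebra.
Set Implicit Arguments. Unset Strict Implicit. Unset Printing Implicit Defensive.
Import GRing.Theory.
Local Open Scope ring_scope.

Definition ordered_abgroup (G : zmodType) (lt : rel G) : Prop :=
  [/\ (forall x, ~~ lt x x),
      (forall x y z, lt x y -> lt y z -> lt x z),
      (forall x y, [\/ lt x y, x = y | lt y x]) &
      (forall x y z, lt x y -> lt (x + z) (y + z))].

Definition oleq (G : zmodType) (lt : rel G) (x y : G) : bool := lt x y || (x == y).

(* Gamma u {oo} is modelled by option G, with None = oo. *)
Definition ext_le (G : zmodType) (lt : rel G) (x y : option G) : bool :=
  match x, y with
  | _, None => true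
  | None, Some _ => false
  | Some a, Some b => oleq lt a b
  end.

(* addition of Gamma extended with gamma + oo = oo + gamma = oo;
   this is the multiplication of T(Gamma) and of Gamma' u {oo} *)
Definition ext_add (G : zmodType) (x y : option G) : option G :=
  match x, y with
  | Some a, Some b => Some (a + b)
  | _, _ => None
  end.

Definition omin (G : zmodType) (lt : rel G) (a b : G) : G :=
  if lt a b then a else b.

(* z \in x [+] y  in the hyperfield T(Gamma) *)
Definition T_hyperadd (G : zmodType) (lt : rel G) (x y z : option G) : Prop :=
  match x, y with
  | None, _ => z = y
  | _, None => z = x
  | Some a, Some b =>
      if a == b then ext_le lt x z = true else z = Some (omin lt a b)
  end.

Definition ext_min (G : zmodType) (lt : rel G) (x y : option G) : option G :=
  match x, y with
  | None, _ => y
  | _, None => x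
  | Some a, Some b => Some (omin lt a b)
  end.

Definition T_valuation (G : zmodType) (lt : rel G) (G' : zmodType) (lt' : rel G')
    (v : option G -> option G') : Prop :=
  [/\ (forall w, exists x, v x = w),
      (forall x, v x = None <-> x = None),
      (forall x y, v (ext_add x y) = ext_add (v x) (v y)) &
      (forall x y z, T_hyperadd lt x y z -> ext_le lt' (ext_min lt' (v x) (v y)) (v z))].

Definition value_group (G : zmodType) (G' : zmodType) (v : option G -> option G') (g : G') : Prop :=
  exists x, x <> None /\ v x = Some g.

Definition subgroup (G : zmodType) (D : G -> Prop) : Prop :=
  D 0 /\ (forall x y, D x -> D y -> D (x - y)).

Definition convex (G : zmodType) (lt : rel G) (D : G -> Prop) : Prop :=
  forall d1 g d2, D d1 -> D d2 -> lt d1 g -> lt g d2 -> D g.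

(* order on G/D:  x + D < y + D  iff  x < y and y - x \notin D *)
Definition quot_lt (G : zmodType) (lt : rel G) (D : G -> Prop) (x y : G) : Prop :=
  lt x y /\ ~ D (y - x).

From mathcomp Require Import all_boot all_order all_algebra.
Set Implicit Arguments. Unset Strict Implicit. Unset Printing Implicit Defensive.
Import GRing.Theory.
Local Open Scope ring_scope.

(* In T(G) the hypersum [x + x] consists of the elements [>= x], so the
   ultrametric inequality for [v] says exactly that [v] is monotone on G, while
   multiplicativity makes it additive.  Hence [v] restricts to a surjective
   monotone homomorphism [f : G -> G'], whose kernel is a convex subgroup [D];
   monotonicity and totality of the order then make [f] an order isomorphism
   [G/D ~ G']. *)

Lemma oleq_anti (G : zmodType) (lt : rel G) :
  (forall x, ~~ lt x x) -> (forall x y z, lt x y -> lt y z -> lt x z) ->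
  forall x y, oleq lt x y -> oleq lt y x -> x = y.
Proof.
move=> irr tr x y /orP[lt_xy|/eqP//] /orP[lt_yx|/eqP//].
by have := irr x; rewrite (tr _ _ _ lt_xy lt_yx).
Qed.

Section MonotoneHom.

Variables (G : zmodType) (lt : rel G) (G' : zmodType) (lt' : rel G').
Hypothesis lt_total : forall x y, [\/ lt x y, x = y | lt y x].
Hypothesis lt'_irr : forall x, ~~ lt' x x.
Hypothesis lt'_trans : forall x y z, lt' x y -> lt' y z -> lt' x z.
Variable f : G -> G'.
Hypothesis fD : forall x y, f (x + y) = f x + f y.
Hypothesis f_mono : forall x y, oleq lt x y -> oleq lt' (f x) (f y).

Let f0 : f 0 = 0.
Proof. by apply: (@addrI _ (f 0)); rewrite -fD !addr0. Qed.

Let fB x y : f (x - y) = f x - f y.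
Proof. by apply: (@addIr _ (f y)); rewrite -fD !subrK. Qed.

Definition hom_kernel (x : G) : Prop := f x = 0.

Lemma hom_kernel_subgroup : subgroup hom_kernel.
Proof.
by split=> [|x y kx ky]; [exact: f0 | rewrite /hom_kernel fB kx ky subr0].
Qed.

Lemma hom_kernel_convex : convex lt hom_kernel.
Proof.
move=> d1 g d2 kd1 kd2 lt_d1g lt_gd2.
apply: (oleq_anti lt'_irr lt'_trans).
- by rewrite -kd2; apply: f_mono; rewrite /oleq lt_gd2.
- by rewrite -kd1; apply: f_mono; rewrite /oleq lt_d1g.
Qed.

Lemma quot_lt_hom_kernel x y : quot_lt lt hom_kernel x y <-> lt' (f x) (f y).
Proof.
have lt'_neq a b : lt' a b -> a != b.
  by move=> lt_ab; apply: contraTneq lt_ab => ->.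
rewrite /quot_lt /hom_kernel fB; split.
- move=> [lt_xy nker_yx]; have /orP[//|/eqP fxy] : oleq lt' (f x) (f y).
    by apply: f_mono; rewrite /oleq lt_xy.
  by case: nker_yx; rewrite fxy subrr.
- move=> lt_fxy; split.
  + case: (lt_total x y) => [//|eq_xy|lt_yx].
      by have := lt'_neq _ _ lt_fxy; rewrite eq_xy eqxx.
    have le_fyx : oleq lt' (f y) (f x) by apply: f_mono; rewrite /oleq lt_yx.
    have le_fxy : oleq lt' (f x) (f y) by rewrite /oleq lt_fxy.
    have := lt'_neq _ _ lt_fxy.
    by rewrite (oleq_anti lt'_irr lt'_trans le_fxy le_fyx) eqxx.
  + by move/eqP; rewrite subr_eq0 eq_sym; apply/negP/lt'_neq.
Qed.

End MonotoneHom.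

Section ValuationRestriction.

Variables (G : zmodType) (lt : rel G) (G' : zmodType) (lt' : rel G').
Variable v : option G -> option G'.
Hypothesis v_val : T_valuation lt lt' v.

(* The [0] default is never used: [v] vanishes only at the zero [None]. *)
Definition valuation_hom (a : G) : G' := odflt 0 (v (Some a)).

Lemma valuation_homE a : v (Some a) = Some (valuation_hom a).
Proof.
case: v_val => _ v_None _ _; rewrite /valuation_hom.
by case E: (v (Some a)) => [b|] //; move/v_None: E.
Qed.

Lemma valuation_homD x y :
  valuation_hom (x + y) = valuation_hom x + valuation_hom y.
Proof.
case: v_val => _ _ vM _.
by have := vM (Some x) (Some y); rewrite /= !valuation_homE => -[].
Qed.

Lemma valuation_hom_mono x y :
  oleq lt x y -> oleq lt' (valuation_hom x) (valuation_hom y).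
Proof.
case: v_val => _ _ _ v_ultra le_xy.
have := v_ultra (Some x) (Some x) (Some y).
by rewrite /T_hyperadd eqxx !valuation_homE /= /omin; case: ifP => _; apply.
Qed.

Lemma valuation_hom_surj :
  (forall g, value_group v g) -> forall g, exists x, valuation_hom x = g.
Proof.
move=> vg g; have [[a|] [nz vx]] := vg g; last by [].
by exists a; move: vx; rewrite valuation_homE => -[].
Qed.

End ValuationRestriction.

Theorem mainTheorem15 (G : zmodType) (lt : rel G) (G' : zmodType) (lt' : rel G')
    (v : option G -> option G') :
  ordered_abgroup lt -> ordered_abgroup lt' ->
  T_valuation lt lt' v ->
  (forall g : G', value_group v g) ->
  exists D : G -> Prop,
    [/\ subgroup D, convex lt D &
      exists f : G -> G',
        [/\ (forall x y, f (x + y) = f x + f y),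
            (forall g, exists x, f x = g),
            (forall x, f x = 0 <-> D x) &
            (forall x y, quot_lt lt D x y <-> lt' (f x) (f y))]].
Proof.
move=> [_ _ lt_total _] [lt'_irr lt'_trans _ _] v_val vg.
have fD := valuation_homD v_val; have f_mono := valuation_hom_mono v_val.
exists (hom_kernel (valuation_hom v)); split.
- exact: hom_kernel_subgroup fD.
- exact: (hom_kernel_convex lt'_irr lt'_trans f_mono).
exists (valuation_hom v); split => //.
- exact: valuation_hom_surj v_val vg.
- exact: (quot_lt_hom_kernel lt_total lt'_irr lt'_trans fD f_mono).
Qed.
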